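(* Let $n \geq 1$ and let $\Gamma$ be a group that is the directed union of a directed family $(\Gamma_i)_{i\in I}$ of subgroups which are pairwise isomorphic and $n$-boundedly acyclic. Then $\Gamma$ is $n$-boundedly acyclic.
   Context: A group $G$ is $n$-boundedly acyclic if $\operatorname{H}^i_b(G;\mathbb{R}) \cong 0$ for all $i \in \{1,\dots,n\}$, where $\operatorname{H}^*_b(\cdot;\mathbb{R})$ is bounded cohomology with trivial real coefficients. *)

From HB Require Import structures.
From Stdlib Require Import Reals ProofIrrelevance.
From mathcomp Require Import all_boot all_order all_algebra.
From mathcomp Require Import Rstruct.
Set Implicit Arguments. Unset Strict Implicit. Unset Printing Implicit Defensive.
Import GRing.Theory Num.Theory.

Record group := Group {
  gcar :> Type;
  gmul : gcar -> gcar -> gcar;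
  gone : gcar;
  ginv : gcar -> gcar;
  gmulA : forall x y z, gmul x (gmul y z) = gmul (gmul x y) z;
  gmul1 : forall x, gmul gone x = x;
  gmulV : forall x, gmul (ginv x) x = gone }.

Arguments gmul {g}. Arguments gone {g}. Arguments ginv {g}.

Record subgroup (G : group) := Subgroup {
  smem : G -> Prop;
  smem1 : smem gone;
  smemM : forall x y, smem x -> smem y -> smem (gmul x y);
  smemV : forall x, smem x -> smem (ginv x) }.

Lemma sig_val_inj (T : Type) (P : T -> Prop) (a b : {x | P x}) :
  proj1_sig a = proj1_sig b -> a = b.
Proof.
case: a b => [x px] [y py] /= exy; subst y.
by rewrite (proof_irrelevance _ px py).
Qed.

Section SubGroupAsGroup.
Variables (G : group) (H : subgroup G).
Definition sg_car := {x : G | smem H x}.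
Definition sg_mul (a b : sg_car) : sg_car :=
  exist _ (gmul (proj1_sig a) (proj1_sig b)) (smemM (proj2_sig a) (proj2_sig b)).
Definition sg_one : sg_car := exist _ gone (smem1 H).
Definition sg_inv (a : sg_car) : sg_car := exist _ (ginv (proj1_sig a)) (smemV (proj2_sig a)).
Lemma sg_mulA x y z : sg_mul x (sg_mul y z) = sg_mul (sg_mul x y) z.
Proof. by apply: sig_val_inj; rewrite /= gmulA. Qed.
Lemma sg_mul1 x : sg_mul sg_one x = x.
Proof. by apply: sig_val_inj; rewrite /= gmul1. Qed.
Lemma sg_mulV x : sg_mul (sg_inv x) x = sg_one.
Proof. by apply: sig_val_inj; rewrite /= gmulV. Qed.
Definition subgroup_group : group := Group sg_mulA sg_mul1 sg_mulV.
End SubGroupAsGroup.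

Definition group_hom (G H : group) (f : G -> H) :=
  forall x y, f (gmul x y) = gmul (f x) (f y).
Definition isomorphic (G H : group) :=
  exists f : G -> H, group_hom f /\ bijective f.

Local Open Scope ring_scope.

(* Homogeneous bar complex with trivial real coefficients:
   degree-k cochains are functions G^(k+1) -> R, here ('I_k.+1 -> G) -> R. *)
Definition face (G : group) (k : nat) (i : 'I_k.+2) (x : 'I_k.+2 -> G)
  : 'I_k.+1 -> G := fun j => x (lift i j).

Definition hdelta (G : group) (k : nat) (f : ('I_k.+1 -> G) -> R)
  : ('I_k.+2 -> G) -> R :=
  fun x => \sum_(i < k.+2) (-1) ^+ i * f (face i x).

Definition invariant_cochain (G : group) (k : nat) (f : ('I_k -> G) -> R) :=
  forall (g : G) (x : 'I_k -> G), f (fun j => gmul g (x j)) = f x.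
Definition bounded_cochain (G : group) (k : nat) (f : ('I_k -> G) -> R) :=
  exists C : R, forall x, `|f x| <= C.
Definition bcochain (G : group) (k : nat) (f : ('I_k -> G) -> R) :=
  invariant_cochain f /\ bounded_cochain f.

(* H^(m+1)_b(G;R) = 0 : every bounded cocycle of degree m+1 is the
   coboundary of a bounded cochain of degree m. *)
Definition Hb_vanishes_succ (G : group) (m : nat) :=
  forall f : ('I_m.+2 -> G) -> R,
    bcochain f -> (forall x, hdelta f x = 0) ->
    exists g : ('I_m.+1 -> G) -> R, bcochain g /\ forall x, f x = hdelta g x.

(* n-boundedly acyclic: H^i_b(G;R) = 0 for all i in {1,...,n}, i.e. i = m+1, m < n. *)
Definition boundedly_acyclic (n : nat) (G : group) :=
  forall m : nat, (m < n)%N -> Hb_vanishes_succ G m.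

(* Vanishing of H^(m+1)_b upgrades, by an open mapping (Baire category)
   argument, to a uniform estimate: some constant C makes every bounded
   cocycle f the coboundary of an invariant cochain of sup norm at most C |f|.
   Such a C is an isomorphism invariant, so one C serves every Gamma_i.  A
   bounded cocycle on Gamma restricts to each Gamma_i, where it has a
   primitive of norm at most C |f|; extending these by zero and taking the
   pointwise limit along an ultrafilter refining the directed family gives an
   invariant bounded primitive on Gamma, because every finite tuple eventually
   lies in Gamma_i.  Ultrafilter limits of bounded real families also stand in
   for completeness of the cochain spaces in the Baire argument. *)

From Stdlib Require Import Reals.
From mathcomp Require Import all_boot all_order all_algebra.
From mathcomp Require Import boolp classical_sets filter reals Rstruct lra ring.
Import Order.TTheory GRing.Theory Num.Theory.
Local Open Scope ring_scope.
Set Implicit Arguments. Unset Strict Implicit.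

Lemma dist_le_eps_eq (a b : R) : (forall e, 0 < e -> `|a - b| <= e) -> a = b.
Proof.
move=> h; apply/eqP; rewrite -subr_eq0 -normr_le0; apply/ler_addgt0Pr => e e0.
by rewrite add0r; apply: h.
Qed.

Definition dist_le (T : Type) (f h : T -> R) e := forall x, `|f x - h x| <= e.

Lemma dist_le_telescope (T : Type) (s : nat -> T -> R) (r : nat -> R) :
  (forall N, dist_le (s N.+1) (s N) (r N - r N.+1)) ->
  forall N d, dist_le (s (N + d)%N) (s N) (r N - r (N + d)%N).
Proof.
move=> sr N d x; elim: d => [|d IH]; first by rewrite addn0 !subrr normr0.
have := ler_distD (s (N + d)%N x) (s (N + d).+1 x) (s N x).
by rewrite addnS; have := sr (N + d)%N x; lra.
Qed.

Lemma dependent_choice (T : Type) (P : nat -> T -> Prop)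
    (Q : nat -> T -> T -> Prop) (x0 : T) :
  P 0%N x0 -> (forall K x, P K x -> exists y, P K.+1 y /\ Q K x y) ->
  exists s : nat -> T, forall K, P K (s K) /\ Q K (s K) (s K.+1).
Proof.
move=> P0 step.
have /choice [next hnext] : forall Kx : nat * T, exists y,
    P Kx.1 Kx.2 -> P Kx.1.+1 y /\ Q Kx.1 Kx.2 y.
  move=> [K x]; have [/step [y hy]|nPKx] := pselect (P K x).
    by exists y => _.
  by exists x.
pose s := fix s K := if K is K'.+1 then next (K', s K') else x0.
have sP K : P K (s K) by elim: K => // K IH; exact: (hnext (K, s K) IH).1.
by exists s => K; split; [|exact: (hnext (K, s K) (sP K)).2].
Qed.

Lemma ultra_refines_directed (K T : Type) (B : K -> set T) (k0 : K) :
  (forall k, (B k !=set0)%classic) ->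
  (forall i j, exists k, (B k `<=` B i `&` B j)%classic) ->
  exists U : set_system T, UltraFilter U /\ forall k, U (B k).
Proof.
move=> Bne Bdir.
have BF : Filter (filter_from setT B).
  by apply: filter_fromT_filter; first by exists k0.
have /ultraFilterLemma [U [UU BU]] : ProperFilter (filter_from setT B).
  by apply: filter_from_proper => k _; exact: Bne.
by exists U; split => // k; apply: BU; exists k.
Qed.

Lemma nat_ultra_tails :
  exists U : set_system nat, UltraFilter U /\ forall N, U (fun n => (N <= n)%N).
Proof.
apply: (@ultra_refines_directed nat nat (fun N n => (N <= n)%N) 0%N) => [N|M N].
  by exists N.
by exists (maxn M N) => n; rewrite geq_max => /andP[].
Qed.

Section UltraLimit.
Variables (J : Type) (U : set_system J).

Definition ulimit (a : J -> R) (L : R) :=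
  forall e, 0 < e -> U (fun j => `|a j - L| <= e).

Context {UU : UltraFilter U}.

Lemma ulimit_cst c : ulimit (fun _ => c) c.
Proof. by move=> e e0; apply: filterE => j; rewrite subrr normr0 ltW. Qed.

Lemma eq_ulimit a b L : U (fun j => a j = b j) -> ulimit b L -> ulimit a L.
Proof. by move=> ab bL e /bL; apply: filterS2 ab => j ->. Qed.

Lemma ulimit_dist_le a L b r :
  ulimit a L -> U (fun j => `|a j - b| <= r) -> `|L - b| <= r.
Proof.
move=> aL ab; apply/ler_addgt0Pr => e e0.
have [j [aLj abj]] := filter_ex (filterI (aL e e0) ab).
have := ler_distD (a j) L b; rewrite distrC in aLj; lra.
Qed.

Lemma ulimit_unique a L1 L2 : ulimit a L1 -> ulimit a L2 -> L1 = L2.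
Proof.
move=> aL1 aL2; apply: dist_le_eps_eq => e e0.
have e2 : 0 < e / 2 by lra.
by apply: ulimit_dist_le aL1 _; apply: filterS (aL2 _ e2) => j; lra.
Qed.

(* The limit is the supremum of the values that [a] eventually exceeds. *)
Lemma ulimit_exists a C : (forall j, `|a j| <= C) -> exists L, ulimit a L.
Proof.
move=> aC; pose S s := U (fun j => s <= a j).
have lowC j : - C <= a j by have := aC j; rewrite ler_norml => /andP[].
have uppC j : a j <= C by have := aC j; rewrite ler_norml => /andP[].
have supS : has_sup S.
  split; first by exists (- C); apply: filterE.
  by exists C => s /filter_ex [j sj]; apply: le_trans sj (uppC j).
exists (sup S) => e e0.
have [s Ss lts] := sup_adherent e0 supS.
have notS : ~ S (sup S + e) by move=> /(sup_upper_bound supS); lra.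
have [//|below] := in_ultra_setVsetC (fun j => sup S + e <= a j) UU.
apply: filterS (filterI Ss below) => j [sj /negP]; rewrite -ltNge => ja.
by rewrite ler_norml; apply/andP; split; lra.
Qed.

Lemma ulimit_fun_exists (T : Type) (a : J -> T -> R) C :
  (forall j t, `|a j t| <= C) ->
  exists L : T -> R, (forall t, `|L t| <= C) /\ forall t, ulimit (a^~ t) (L t).
Proof.
move=> aC; have /choice [L aL] : forall t, exists L, ulimit (a^~ t) L.
  by move=> t; apply: ulimit_exists (aC^~ t).
exists L; split=> // t; rewrite -[L t]subr0; apply: ulimit_dist_le (aL t) _.
by apply: filterE => j; rewrite subr0.
Qed.

End UltraLimit.

Lemma ulimit_geometric (U : set_system nat) {FU : Filter U} (a : nat -> R) L c :
  (forall N, U (fun n => (N <= n)%N)) ->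
  (forall K, `|a K - L| <= c / (2 ^ K)%:R) -> ulimit U a L.
Proof.
move=> tails aL e e0; pose B := Num.Def.archi_bound (`|c| / e).
have cB : `|c| / e < B%:R by apply: archi_boundP; rewrite divr_ge0 // ltW.
apply: filterS (tails B) => K BK; apply: le_trans (aL K) _.
rewrite ler_pdivrMr ?ltr0n ?expn_gt0 //; apply: le_trans (ler_norm c) _.
rewrite mulrC -ler_pdivrMr //; apply: le_trans (ltW cB) _.
by rewrite ler_nat (leq_trans BK) // ltnW // ltn_expl.
Qed.

Section Coboundary.
Variables (G : group) (k : nat).
Implicit Types (a b : ('I_k.+1 -> G) -> R).

Lemma eq_hdelta a b x : (forall y, a y = b y) -> hdelta a x = hdelta b x.
Proof. by move=> ab; apply: eq_bigr => i _; rewrite ab. Qed.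

Lemma hdelta0 x : hdelta (fun _ : 'I_k.+1 -> G => 0) x = 0.
Proof. by rewrite /hdelta big1 // => i _; rewrite mulr0. Qed.

Lemma hdeltaD a b x : hdelta (fun y => a y + b y) x = hdelta a x + hdelta b x.
Proof. by rewrite /hdelta -big_split; apply: eq_bigr => i _ /=; ring. Qed.

Lemma hdeltaB a b x : hdelta (fun y => a y - b y) x = hdelta a x - hdelta b x.
Proof. by rewrite /hdelta -sumrB; apply: eq_bigr => i _; ring. Qed.

Lemma hdeltaZ c a x : hdelta (fun y => c * a y) x = c * hdelta a x.
Proof. by rewrite /hdelta mulr_sumr; apply: eq_bigr => i _; ring. Qed.

Lemma norm_hdelta_le a x e :
  (forall i, `|a (face i x)| <= e) -> `|hdelta a x| <= k.+2%:R * e.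
Proof.
move=> ae; apply: le_trans (ler_norm_sum _ _ _) _.
have -> : k.+2%:R * e = \sum_(i < k.+2) e by rewrite sumr_const card_ord mulr_natl.
apply: ler_sum => i _.
by rewrite normrM normrX normrN1 expr1n mul1r.
Qed.

Lemma ulimit_hdelta (J : Type) (U : set_system J) {UU : UltraFilter U}
    (g : J -> ('I_k.+1 -> G) -> R) L :
  (forall y, ulimit U (g^~ y) (L y)) ->
  forall x, ulimit U (fun j => hdelta (g j) x) (hdelta L x).
Proof.
move=> gL x e e0; have k0 : 0 < k.+2%:R :> R by rewrite ltr0n.
have /filter_forall : forall i,
    U (fun j => `|g j (face i x) - L (face i x)| <= e / k.+2%:R).
  by move=> i; apply: gL; rewrite divr_gt0.
apply: filterS => j gLj; rewrite -hdeltaB -[e](divfK (lt0r_neq0 k0)) mulrC.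
exact: norm_hdelta_le.
Qed.

End Coboundary.

Lemma ulimit_invariant (J : Type) (U : set_system J) {UU : UltraFilter U}
    (G : group) k (g : J -> ('I_k -> G) -> R) L :
  (forall y, ulimit U (g^~ y) (L y)) ->
  (forall h y, U (fun j => g j (fun i => gmul h (y i)) = g j y)) ->
  invariant_cochain L.
Proof.
move=> gL ginv h y.
exact: ulimit_unique (gL _) (eq_ulimit (ginv h y) (gL y)).
Qed.

Definition bcocycle (G : group) m (f : ('I_m.+2 -> G) -> R) :=
  bcochain f /\ forall x, hdelta f x = 0.

Definition bounded_primitive (G : group) k (B : R)
    (f : ('I_k.+2 -> G) -> R) (g : ('I_k.+1 -> G) -> R) :=
  [/\ invariant_cochain g, forall y, `|g y| <= B & forall x, f x = hdelta g x].

Lemma ulimit_primitive (J : Type) (U : set_system J) {UU : UltraFilter U}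
    (G : group) k B (g : J -> ('I_k.+1 -> G) -> R) (f : ('I_k.+2 -> G) -> R) :
  (forall j y, `|g j y| <= B) ->
  (forall h y, U (fun j => g j (fun i => gmul h (y i)) = g j y)) ->
  (forall x, ulimit U (fun j => hdelta (g j) x) (f x)) ->
  exists2 L, bounded_primitive B f L & forall y, ulimit U (g^~ y) (L y).
Proof.
move=> gB ginv gf; have [L [LB gL]] := ulimit_fun_exists gB.
exists L => //; split => // [|x]; first exact: ulimit_invariant gL ginv.
exact: ulimit_unique (gf x) (ulimit_hdelta gL x).
Qed.

Section Cocycles.
Variables (G : group) (m : nat).
Implicit Types (a b : ('I_m.+2 -> G) -> R).

Lemma eq_bcocycle a b : (forall x, a x = b x) -> bcocycle a -> bcocycle b.
Proof.
move=> ab [[ainv [C aC]] acoc]; split; first split.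
- by move=> g x; rewrite -!ab ainv.
- by exists C => x; rewrite -ab.
by move=> x; rewrite -(eq_hdelta x ab) acoc.
Qed.

Lemma bcocycle0 : bcocycle (fun _ : 'I_m.+2 -> G => 0).
Proof.
by split; [split=> //; exists 0 => x; rewrite normr0 | move=> x; rewrite hdelta0].
Qed.

Lemma bcocycleD a b : bcocycle a -> bcocycle b -> bcocycle (fun x => a x + b x).
Proof.
move=> [[ainv [Ca aC]] acoc] [[binv [Cb bC]] bcoc]; split; first split.
- by move=> g x; rewrite ainv binv.
- by exists (Ca + Cb) => x; apply: le_trans (ler_normD _ _) (lerD (aC x) (bC x)).
by move=> x; rewrite hdeltaD acoc bcoc addr0.
Qed.

Lemma bcocycleZ c a : bcocycle a -> bcocycle (fun x => c * a x).
Proof.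
move=> [[ainv [C aC]] acoc]; split; first split.
- by move=> g x; rewrite ainv.
- by exists (`|c| * C) => x; rewrite normrM ler_wpM2l.
by move=> x; rewrite hdeltaZ acoc mulr0.
Qed.

Lemma bcocycleB a b : bcocycle a -> bcocycle b -> bcocycle (fun x => a x - b x).
Proof.
move=> acoc bcoc; apply: eq_bcocycle _ (bcocycleD acoc (bcocycleZ (-1) bcoc)) => x.
by rewrite mulN1r.
Qed.

End Cocycles.

Section OpenMapping.
Variables (G : group) (m : nat).
Notation Y := ('I_m.+2 -> G).
Notation X := ('I_m.+1 -> G).

(* [F] is built as a bounded invariant primitive of [0] one degree up, i.e. a
   bounded cocycle. *)
Lemma nested_balls_limit (s : nat -> Y -> R) (r : nat -> R) :
  (forall N, bcocycle (s N)) -> (forall N, 0 <= r N) ->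
  (forall N, dist_le (s N.+1) (s N) (r N - r N.+1)) ->
  exists2 F, bcocycle F & forall N, dist_le F (s N) (r N).
Proof.
move=> scoc r0 sr; have [U [UU tails]] := nat_ultra_tails.
have [[_ [C s0C]] _] := scoc 0%N.
have nest := dist_le_telescope sr.
have sC N x : `|s N x| <= C + r 0%N.
  have := nest 0%N N x; have := s0C x; have := r0 N.
  have := ler_distD (s 0%N x) (s N x) 0; rewrite !subr0 add0n; lra.
have sinv h y : U (fun N => s N (fun i => gmul h (y i)) = s N y).
  by apply: filterE => N; have [[]] := scoc N.
have scoc0 x : ulimit U (fun N => hdelta (s N) x) 0.
  by apply: eq_ulimit _ (ulimit_cst 0); apply: filterE => N; have [_] := scoc N.
have [F [Finv FC Fcoc] sF] := ulimit_primitive sC sinv scoc0.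
exists F; first by split; [split=> //; exists (C + r 0%N) | move=> x; rewrite -Fcoc].
move=> N x; apply: ulimit_dist_le (sF x) _.
apply: filterS (tails N) => M /subnKC <-.
by have := nest N (M - N)%N x; have := r0 (N + (M - N))%N; lra.
Qed.

Definition primitive_le (N : R) (f : Y -> R) :=
  bcocycle f /\ exists g, bounded_primitive N f g.

Definition dense_in_ball N (f0 : Y -> R) r := forall f, bcocycle f ->
  dist_le f f0 r -> forall e, 0 < e -> exists2 h, primitive_le N h & dist_le f h e.

Lemma ball_avoiding_primitives N f0 r : 0 < r -> ~ dense_in_ball N f0 (r / 2) ->
  exists fr : (Y -> R) * R, [/\ bcocycle fr.1, 0 < fr.2,
    dist_le fr.1 f0 (r - fr.2) & forall h, primitive_le N h -> ~ dist_le fr.1 h fr.2].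
Proof.
move=> r0 nodense; apply: contrapT => noball; apply: nodense => f fcoc ff0 e e0.
apply: contrapT => far; apply: noball; exists (f, Num.min e (r / 2)).
have le_r2 : Num.min e (r / 2) <= r / 2 by rewrite ge_min lexx orbT.
split => //=; first by rewrite lt_min e0 /=; lra.
  by move=> x; have := ff0 x; lra.
move=> h hN fh; apply: far; exists h => // x.
by apply: le_trans (fh x) _; rewrite ge_min lexx.
Qed.

Hypothesis Hb0 : Hb_vanishes_succ G m.

(* Otherwise a sequence of nested balls, the (N+1)-st avoiding [primitive_le N],
   converges to a bounded cocycle, which is a coboundary and so lies in some
   [primitive_le N]. *)
Lemma dense_primitive_ball :
  exists N : nat, exists f0 r, [/\ 0 < r, bcocycle f0 & dense_in_ball N%:R f0 r].
Proof.
apply: contrapT => nodense.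
have [N [f0 r] [/= r0 f0coc]|s hs] := dependent_choice
  (P := fun _ fr => 0 < fr.2 /\ bcocycle fr.1)
  (Q := fun N fr fr' => dist_le fr'.1 fr.1 (fr.2 - fr'.2) /\
     forall h, primitive_le N%:R h -> ~ dist_le fr'.1 h fr'.2)
  (x0 := (fun _ => 0, 1)) (conj ltr01 (bcocycle0 G m)) _.
  have [|fr [? ? ? ?]] := @ball_avoiding_primitives N%:R f0 r r0; last by exists fr.
  by move=> dense; apply: nodense; exists N, f0, (r / 2); split=> //; lra.
have [F Fcoc Fs] := nested_balls_limit (s := fun N => (s N).1)
  (fun N => (hs N).1.2) (fun N => ltW (hs N).1.1) (fun N => (hs N).2.1).
have [g [[ginv [C gC]] Fg]] := Hb0 Fcoc.1 Fcoc.2.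
pose N := Num.Def.archi_bound `|C|.
have CN : C <= N%:R by apply: le_trans (ler_norm C) (ltW (archi_boundP _)).
have FN : primitive_le N%:R F.
  by split=> //; exists g; split=> // y; apply: le_trans (gC y) CN.
have [_ [_ farN]] := hs N; apply: (farN F FN) => x.
by rewrite distrC; apply: Fs.
Qed.

(* Rescale [f] into the ball around [f0] and approximate both ends there. *)
Lemma approx_primitive : exists2 M, 0 <= M & forall f c e,
  bcocycle f -> 0 < c -> (forall x, `|f x| <= c) -> 0 < e ->
  exists g : X -> R, [/\ invariant_cochain g, forall y, `|g y| <= M * c,
    bcocycle (hdelta g) & dist_le f (hdelta g) e].
Proof.
have [N [f0 [r [r0 f0coc dense]]]] := dense_primitive_ball.
exists (2 * N%:R / r); first by apply: divr_ge0 (ltW r0); apply: mulr_ge0.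
move=> f c e fcoc c0 fc e0; pose l := r / c.
have l0 : 0 < l by rewrite divr_gt0.
have f'coc : bcocycle (fun x => f0 x + l * f x).
  by apply: bcocycleD; last exact: bcocycleZ.
have f'f0 : dist_le (fun x => f0 x + l * f x) f0 r.
  move=> x; rewrite addrAC subrr add0r normrM gtr0_norm //.
  by rewrite -(divfK (lt0r_neq0 c0) r) -/l ler_pM2l.
have el : 0 < e * l / 2 by rewrite divr_gt0 // mulr_gt0.
have [h1 [h1coc [g1 [g1inv g1N h1g1]]] h1f'] := dense _ f'coc f'f0 _ el.
have f0f0 : dist_le f0 f0 r by move=> x; rewrite subrr normr0 ltW.
have [h2 [h2coc [g2 [g2inv g2N h2g2]]] h2f0] := dense _ f0coc f0f0 _ el.
have dg x : hdelta (fun y => l^-1 * (g1 y - g2 y)) x = l^-1 * (h1 x - h2 x).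
  by rewrite hdeltaZ hdeltaB h1g1 h2g2.
exists (fun y => l^-1 * (g1 y - g2 y)); split.
- by move=> h y; rewrite g1inv g2inv.
- move=> y; rewrite normrM gtr0_norm ?invr_gt0 //.
  have -> : 2 * N%:R / r * c = l^-1 * (2 * N%:R).
    by rewrite /l invf_div; field; rewrite gt_eqF.
  rewrite ler_pM2l ?invr_gt0 //; apply: le_trans (ler_normB _ _) _.
  by have := g1N y; have := g2N y; lra.
- by apply: eq_bcocycle (fun x => esym (dg x)) _; exact/bcocycleZ/bcocycleB.
move=> x; rewrite dg.
have -> : f x - l^-1 * (h1 x - h2 x) =
    l^-1 * ((f0 x + l * f x - h1 x) - (f0 x - h2 x)).
  by field; rewrite gt_eqF.
rewrite normrM gtr0_norm ?invr_gt0 // ler_pdivrMl //.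
apply: le_trans (ler_normB _ _) _.
by have := h1f' x; have := h2f0 x; lra.
Qed.

(* Apply [approx_primitive] to the successive remainders, with halving bounds. *)
Lemma primitive_approximations : exists2 M, 0 <= M & forall f c,
  bcocycle f -> 0 < c -> (forall x, `|f x| <= c) ->
  exists S : nat -> X -> R, forall K, [/\ invariant_cochain (S K),
    forall y, `|S K y| <= M * c & dist_le f (hdelta (S K)) (c / (2 ^ K)%:R)].
Proof.
have [M M0 approx] := approx_primitive.
exists (2 * M); first lra.
move=> f c fcoc c0 fc; pose d K := c / (2 ^ K)%:R.
have d0 K : 0 < d K by rewrite divr_gt0 // ltr0n expn_gt0.
have dS K : d K.+1 = d K / 2.
  by rewrite /d expnS natrM; field; rewrite pnatr_eq0 -lt0n expn_gt0.
pose P K (eS : (Y -> R) * (X -> R)) := [/\ bcocycle eS.1,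
  forall x, `|eS.1 x| <= d K, invariant_cochain eS.2,
  forall y, `|eS.2 y| <= 2 * M * (c - d K) & forall x, f x = eS.1 x + hdelta eS.2 x].
have P0 : P 0%N (f, fun _ => 0).
  split=> //= [|y|x]; first by rewrite /d expn0 divr1.
    by rewrite normr0 /d expn0 divr1 subrr mulr0.
  by rewrite hdelta0 addr0.
have Pstep K eS : P K eS -> exists eS', P K.+1 eS' /\ True.
  case: eS => e S [/= ecoc ed Sinv SM feS].
  have [g [ginv gM gcoc egd]] := approx e (d K) (d K.+1) ecoc (d0 K) ed (d0 K.+1).
  exists (fun x => e x - hdelta g x, fun y => S y + g y); split=> //; split=> /=.
  - exact: bcocycleB.
  - exact: egd.
  - by move=> h y; rewrite Sinv ginv.
  - move=> y; apply: le_trans (ler_normD _ _) _.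
    by have := SM y; have := gM y; rewrite dS; nra.
  - by move=> x; rewrite hdeltaD feS; ring.
have [s hs] := dependent_choice P0 Pstep.
exists (fun K => (s K).2) => K; have [[_ eK Sinv SM feS] _] := hs K; split=> //.
- by move=> y; apply: le_trans (SM y) _; have := d0 K; nra.
- by move=> x; rewrite {1}feS addrK.
Qed.

End OpenMapping.

Definition Hb_vanishes_uniformly (G : group) m (C : R) := 0 <= C /\
  forall f c, bcocycle f -> 0 < c -> (forall x : 'I_m.+2 -> G, `|f x| <= c) ->
  exists g, bounded_primitive (C * c) f g.

Lemma Hb_vanishes_succ_uniform (G : group) m :
  Hb_vanishes_succ G m -> exists C, Hb_vanishes_uniformly G m C.
Proof.
move=> Hb0; have [M M0 approx] := primitive_approximations Hb0.
exists M; split=> // f c fcoc c0 fc.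
have [S hS] := approx f c fcoc c0 fc.
have [U [UU tails]] := nat_ultra_tails.
have SB K y : `|S K y| <= M * c by have [] := hS K.
have Sinv h y : U (fun K => S K (fun i => gmul h (y i)) = S K y).
  by apply: filterE => K; have [] := hS K.
have Sf x : ulimit U (fun K => hdelta (S K) x) (f x).
  by apply: ulimit_geometric tails _ => K; rewrite distrC; have [_ _] := hS K.
by have [L fL _] := ulimit_primitive SB Sinv Sf; exists L.
Qed.

Section Comap.
Variables (G H : group) (phi : G -> H).
Hypothesis phiM : group_hom phi.

Definition comap_cochain k (f : ('I_k -> H) -> R) : ('I_k -> G) -> R :=
  fun x => f (fun j => phi (x j)).

Lemma comap_invariant k (f : ('I_k -> H) -> R) :
  invariant_cochain f -> invariant_cochain (comap_cochain f).
Proof.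
move=> finv g x; rewrite /comap_cochain -(finv (phi g) (fun j => phi (x j))).
by congr f; apply/funext => j; apply: phiM.
Qed.

Lemma comap_bcocycle m (f : ('I_m.+2 -> H) -> R) :
  bcocycle f -> bcocycle (comap_cochain f).
Proof.
move=> [[finv [C fC]] fcoc]; split; first split.
- exact: comap_invariant.
- by exists C => x; apply: fC.
by move=> x; exact: fcoc (fun j => phi (x j)).
Qed.

End Comap.

Lemma Hb_vanishes_uniformly_iso (G H : group) m C :
  isomorphic G H -> Hb_vanishes_uniformly G m C -> Hb_vanishes_uniformly H m C.
Proof.
move=> [phi [phiM [psi phiK psiK]]] [C0 GC]; split=> // f c fcoc c0 fc.
have psiM : group_hom psi.
  by move=> a b; apply: (can_inj phiK); rewrite phiM !psiK.
have [g [ginv gC fg]] := GC _ c (comap_bcocycle phiM fcoc) c0 (fun x => fc _).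
exists (comap_cochain psi g); split=> [||x]; first exact: comap_invariant.
  by move=> y; apply: gC.
have := fg (fun j => psi (x j)); rewrite /comap_cochain.
by have -> : (fun j => phi (psi (x j))) = x by apply/funext => j; rewrite psiK.
Qed.

Section ZeroExtension.
Variables (G : group) (H : subgroup G).
Notation GH := (subgroup_group H).

Lemma subgroup_val_hom : group_hom (fun x : GH => proj1_sig x).
Proof. by []. Qed.

Definition zero_extend k (g : ('I_k -> GH) -> R) : ('I_k -> G) -> R := fun y =>
  if pselect (forall j, smem H (y j)) is left yH
  then g (fun j => exist _ (y j) (yH j)) else 0.

Lemma zero_extendK k (g : ('I_k -> GH) -> R) x :
  zero_extend g (fun j => proj1_sig (x j)) = g x.
Proof.
rewrite /zero_extend; case: pselect => [xH|]; last by case=> j; apply: proj2_sig.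
by congr g; apply/funext => j; apply: sig_val_inj.
Qed.

Lemma norm_zero_extend_le k (g : ('I_k -> GH) -> R) B :
  0 <= B -> (forall x, `|g x| <= B) -> forall y, `|zero_extend g y| <= B.
Proof.
by move=> B0 gB y; rewrite /zero_extend; case: pselect => // _; rewrite normr0.
Qed.

Lemma zero_extend_invariant_in k (g : ('I_k -> GH) -> R) h (x : 'I_k -> GH) :
  invariant_cochain g -> smem H h ->
  zero_extend g (fun j => gmul h (proj1_sig (x j))) =
  zero_extend g (fun j => proj1_sig (x j)).
Proof.
move=> ginv hH; rewrite zero_extendK -(ginv (exist _ h hH) x).
exact: zero_extendK (fun j => sg_mul (exist _ h hH) (x j)).
Qed.

Lemma hdelta_zero_extend k (g : ('I_k.+1 -> GH) -> R) x :
  hdelta (zero_extend g) (fun j => proj1_sig (x j)) = hdelta g x.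
Proof. by apply: eq_bigr => i _; congr (_ * _); apply: zero_extendK. Qed.

End ZeroExtension.

Lemma directed_union_Hb_vanishes (Gam : group) (I : Type) (Gi : I -> subgroup Gam)
    m C :
  (forall i j, exists k,
     (forall x, smem (Gi i) x -> smem (Gi k) x) /\
     (forall x, smem (Gi j) x -> smem (Gi k) x)) ->
  (forall x, exists i, smem (Gi i) x) ->
  (forall i, Hb_vanishes_uniformly (subgroup_group (Gi i)) m C) ->
  Hb_vanishes_succ Gam m.
Proof.
move=> Gdir Gcover GC f fb fcoc; have [_ [Bf fB]] := fb.
have [i0 _] := Gcover gone; have [C0 _] := GC i0.
pose c := `|Bf| + 1.
have c0 : 0 < c by rewrite ltr_pwDr ?normr_ge0.
have fc x : `|f x| <= c by apply: le_trans (fB x) _; rewrite ler_wpDr ?ler_norm.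
have gex i : exists g, bounded_primitive (C * c)
    (comap_cochain (fun x : subgroup_group (Gi i) => proj1_sig x) f) g.
  have [_ GiC] := GC i.
  exact: GiC _ c (comap_bcocycle (@subgroup_val_hom _ (Gi i)) (conj fb fcoc)) c0
    (fun x => fc _).
pose g i := proj1_sig (cid (gex i)); have hg i := proj2_sig (cid (gex i)).
have [U [UU Uincl]] : exists U : set_system I, UltraFilter U /\
    forall i, U (fun l => forall x, smem (Gi i) x -> smem (Gi l) x).
  apply: ultra_refines_directed i0 _ _ => [i|i j]; first by exists i.
  have [k [ik jk]] := Gdir i j; exists k => l kl.
  by split=> x xGi; apply: kl; [apply: ik | apply: jk].
have eventually_in k (y : 'I_k -> Gam) : U (fun l => forall j, smem (Gi l) (y j)).
  apply: filter_forall => j; have [i yi] := Gcover (y j).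
  by apply: filterS (Uincl i) => l il; apply: il.
pose E l := zero_extend (g l).
have EB l y : `|E l y| <= C * c.
  by have [_ gB _] := hg l; exact: norm_zero_extend_le (mulr_ge0 C0 (ltW c0)) gB y.
have Einv h y : U (fun l => E l (fun i => gmul h (y i)) = E l y).
  have [i hi] := Gcover h; apply: filterS (filterI (eventually_in _ y) (Uincl i)).
  move=> l [yl il]; have [ginv _ _] := hg l.
  exact: zero_extend_invariant_in (fun j => exist _ (y j) (yl j)) ginv (il h hi).
have Ef x : ulimit U (fun l => hdelta (E l) x) (f x).
  apply: eq_ulimit _ (ulimit_cst _); apply: filterS (eventually_in _ x) => l xl.
  have [_ _ fg] := hg l.
  by rewrite (hdelta_zero_extend (g l) (fun j => exist _ (x j) (xl j))) -fg.
have [L [Linv LB Lf] _] := ulimit_primitive EB Einv Ef.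
by exists L; split=> //; split=> //; exists (C * c).
Qed.

Unset Implicit Arguments.

Theorem corollary4p14 (n : nat) (hn : (1 <= n)%N) (Gam : group)
  (I : Type) (Gi : I -> subgroup Gam)
  (hdir : forall i j : I, exists k : I,
     (forall x, smem (Gi i) x -> smem (Gi k) x) /\
     (forall x, smem (Gi j) x -> smem (Gi k) x))
  (hunion : forall x : Gam, exists i : I, smem (Gi i) x)
  (hiso : forall i j : I,
     isomorphic (subgroup_group (Gi i)) (subgroup_group (Gi j)))
  (hacyc : forall i : I, boundedly_acyclic n (subgroup_group (Gi i))) :
  boundedly_acyclic n Gam.
Proof.
move=> m lt_mn; have [i0 _] := hunion gone.
have [C i0C] := Hb_vanishes_succ_uniform (hacyc i0 m lt_mn).
apply: (directed_union_Hb_vanishes hdir hunion (C := C)) => i.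
exact: Hb_vanishes_uniformly_iso (hiso i0 i) i0C.
Qed.
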